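(* If $u_\beta$ has affine factor complexity, then $t_m=1$.
   Context: $\beta>1$ is a simple Parry number with $d_\beta(1)=t_1\cdots t_m$, $m\ge2$, nonnegative integer digits, $t_1\ge1$, $t_m\ge1$, satisfying the Parry condition ($t_i\cdots t_m0^\omega$ lexicographically strictly smaller than $t_1\cdots t_m0^\omega$ for $2\le i\le m$). $\varphi$ is the substitution on $\mathcal A=\{0,\dots,m-1\}$ with $\varphi(k)=0^{t_{k+1}}(k+1)$ for $0\le k\le m-2$, $\varphi(m-1)=0^{t_m}$, and $u_\beta=\lim_n\varphi^n(0)$ is its fixed point. Affine factor complexity means that the number $\mathcal C(n)$ of factors of $u_\beta$ of length $n$ equals $an+b$ for all $n\in\mathbb N$, for some constants $a,b$. *)

From Stdlib Require Import Reals.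
From mathcomp Require Import all_boot.
Set Implicit Arguments. Unset Strict Implicit. Unset Printing Implicit Defensive.

Definition renyiT (b x : R) : R := Rminus (Rmult b x) (IZR (Int_part (Rmult b x))).

(* d_beta(1) = t_1 ... t_m (finite): t_{i+1} = floor(beta T^i(1)) for i < m,
   and T^m(1) = 0 (so the expansion stops). Digits are 0-indexed in the list t. *)
Definition finite_dbeta1 (b : R) (t : seq nat) : Prop :=
  (forall i, i < size t ->
     INR (nth 0 t i) = IZR (Int_part (Rmult b (iter i (renyiT b) R1)))) /\
  iter (size t) (renyiT b) R1 = R0.

Fixpoint lexlt (s1 s2 : seq nat) : bool :=
  match s1, s2 with
  | x :: s1', y :: s2' => (x < y) || ((x == y) && lexlt s1' s2')
  | [::], _ :: _ => true
  | _, _ => false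
  end.

(* t_i ... t_m 0^omega <lex t_1 ... t_m 0^omega for 2 <= i <= m.  Both infinite
   words are 0 beyond position m, so it suffices to compare the first m letters:
   (drop (i-1) t ++ 0^(i-1)) versus t; here k = i-1 ranges over 1..m-1. *)
Definition parry_condition (t : seq nat) : Prop :=
  forall k, 1 <= k < size t -> lexlt (drop k t ++ nseq k 0) t.

Definition phi (t : seq nat) (k : nat) : seq nat :=
  if k.+1 < size t then nseq (nth 0 t k) 0 ++ [:: k.+1]
  else nseq (nth 0 t k) 0.

Definition phiw (t : seq nat) (w : seq nat) : seq nat := flatten (map (phi t) w).

Definition phin (t : seq nat) (n : nat) : seq nat := iter n (phiw t) [:: 0].

(* u is the infinite word lim_n phi^n(0): every phi^n(0) is a prefix of u and
   the prefixes phi^n(0) exhaust u. *)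
Definition is_fixed_point_limit (t : seq nat) (u : nat -> nat) : Prop :=
  (forall n i, i < size (phin t n) -> u i = nth 0 (phin t n) i) /\
  (forall i, exists n, i < size (phin t n)).

Definition is_factor (u : nat -> nat) (w : seq nat) : Prop :=
  exists i, w = mkseq (fun j => u (i + j)) (size w).

Definition factor_complexity (u : nat -> nat) (n c : nat) : Prop :=
  exists s : seq (seq nat), uniq s /\ size s = c /\
    forall w, w \in s <-> (size w = n /\ is_factor u w).

Definition affine_complexity (u : nat -> nat) : Prop :=
  exists a b : R, forall n, exists c,
    factor_complexity u n c /\ INR c = Rplus (Rmult a (INR n)) b.

From Stdlib Require Import Reals.
From mathcomp Require Import all_boot zify.

Set Implicit Arguments.
Unset Strict Implicit.
Unset Printing Implicit Defensive.

(* If t_m >= 2, the Parry condition gives t_1 >= t_m >= 2.  The word 0^{t_1} 1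
   is then preceded in u by every letter k < m (k 0^{t_1} 1 occurs in
   phi((k-1) 0) and 0 0^{t_1} 1 in phi((m-1) 0)), and 0^{t_1+1} is preceded both
   by 0 (inside phi((m-1) 0), as t_m >= 2) and by a nonzero letter (at the left
   end of its run of zeros, since every phi^n(0) starts with 0^{t_1} 1).  As
   every factor has a left extension, C(t_1+2) - C(t_1+1) >= (m-1) + 1 = m,
   whereas affine complexity forces this increment to be C(1) - C(0) <= m - 1. *)

Lemma zero_run_preceded (T : nat) (v p q : seq nat) :
  prefix (nseq T 0 ++ [:: 1]) v -> v = p ++ nseq T.+1 0 ++ q ->
  exists2 x, x != 0 & infix (x :: nseq T.+1 0) v.
Proof.
move=> v_prefix; elim/last_ind: p q => [|p y IHp] q vE.
  have : ~~ prefix (nseq T 0 ++ [:: 1]) (nseq T.+1 0 ++ q).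
    by elim: T {v_prefix vE} => //= T.
  by rewrite -[_ ++ q]cat0s -vE v_prefix.
have [y0|y_neq0] := eqVneq y 0; last first.
  by exists y => //; apply/infixP; exists p, q; rewrite vE cat_rcons.
apply: (IHp (0 :: q)); rewrite vE y0 cat_rcons; congr (p ++ _).
by elim: T {v_prefix IHp vE} => //= T ->.
Qed.

Lemma leq_size_image_split (T U : eqType) (f : T -> U) (X E : seq T) (Y B : seq U) :
  uniq X -> uniq E -> uniq Y -> {subset E <= X} ->
  {subset Y <= map f X} -> {subset map f E <= B} ->
  size Y + size E <= size X + size B.
Proof.
move=> X_uniq E_uniq Y_uniq EX YX EB.
have Y_le : size Y <= size B + count (predC (mem E)) X.
  rewrite -size_filter -(size_map f) -size_cat.
  apply: uniq_leq_size Y_uniq _ => y /YX /mapP [x x_X ->]; rewrite mem_cat.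
  case: (boolP (x \in E)) => x_E; first by rewrite EB // map_f.
  by rewrite map_f ?orbT // mem_filter /= x_E.
have E_le : size E <= count (mem E) X.
  rewrite -size_filter; apply: uniq_leq_size E_uniq _ => x x_E.
  by rewrite mem_filter /= x_E EX.
by rewrite -(count_predC (mem E) X); lia.
Qed.

Lemma parry_last_leq_head t : 2 <= size t -> parry_condition t -> last 0 t <= nth 0 t 0.
Proof.
case/lastP: t => [|s x] //; rewrite size_rcons => s_gt0 parry.
have := parry (size s); rewrite size_rcons leqnn -cats1 drop_size_cat // last_cat.
case: s s_gt0 {parry} => [|a s] //= _ /(_ isT).
by case/orP => [/ltnW //|/andP [/eqP -> _]].
Qed.

Lemma complexity0_gt0 u c : factor_complexity u 0 c -> 0 < c.
Proof.
move=> [s [_ [<- s_factors]]].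
have : [::] \in s by apply/s_factors; split => //; exists 0.
by case: s {s_factors}.
Qed.

Lemma affine_complexity_increment u n : affine_complexity u ->
  exists c0 c1 c c', [/\ factor_complexity u 0 c0, factor_complexity u 1 c1,
    factor_complexity u n c, factor_complexity u n.+1 c' & c' + c0 = c + c1].
Proof.
move=> [a [b affine]].
have [c0 [C0 e0]] := affine 0; have [c1 [C1 e1]] := affine 1.
have [c [C e]] := affine n; have [c' [C' e']] := affine n.+1.
exists c0, c1, c, c'; split => //; apply: INR_eq.
rewrite -!plusE !plus_INR e0 e1 e e' S_INR.
change (INR 0) with R0; change (INR 1) with R1; ring.
Qed.

Section Substitution.
Variable t : seq nat.

Lemma phiw_cat a b : phiw t (a ++ b) = phiw t a ++ phiw t b.
Proof. by rewrite /phiw map_cat flatten_cat. Qed.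

Lemma iter_phiw_cat n a b :
  iter n (phiw t) (a ++ b) = iter n (phiw t) a ++ iter n (phiw t) b.
Proof. by elim: n => //= n ->; rewrite phiw_cat. Qed.

Lemma phiw_infix a b : infix a b -> infix (phiw t a) (phiw t b).
Proof. by move=> /infixP [p [q ->]]; rewrite !phiw_cat; apply: infix_infix. Qed.

Lemma phiw_pair x y : phiw t [:: x; y] = phi t x ++ phi t y.
Proof. by rewrite /phiw /= cats0. Qed.

Lemma phi_ltE k : k.+1 < size t -> phi t k = nseq (nth 0 t k) 0 ++ [:: k.+1].
Proof. by rewrite /phi => ->. Qed.

Lemma phi_lastE : 0 < size t -> phi t (size t).-1 = nseq (last 0 t) 0.
Proof. by move=> t_gt0; rewrite /phi prednK // ltnn nth_last. Qed.

Lemma phin_lt_size n x : 0 < size t -> x \in phin t n -> x < size t.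
Proof.
move=> t_gt0; elim: n x => [x|n IHn x]; first by rewrite inE => /eqP ->.
rewrite /phin iterS -/(phin t n) => /flattenP [_ /mapP [y /IHn y_lt ->]].
rewrite /phi; case: ifP => [y1_lt|_]; rewrite ?mem_cat ?inE mem_nseq.
  by case/orP => [/andP [_ /eqP ->] | /eqP ->].
by case/andP => _ /eqP ->.
Qed.

Definition phi_factor (w : seq nat) : Prop := exists n, infix w (phin t n).

Lemma phi_factor_infix v w : infix v w -> phi_factor w -> phi_factor v.
Proof. by move=> vw [n wn]; exists n; apply: infix_trans wn. Qed.

Lemma phi_factor_phiw w : phi_factor w -> phi_factor (phiw t w).
Proof. by move=> [n wn]; exists n.+1; apply: phiw_infix. Qed.

Lemma is_factor_phi_factor u w :
  is_fixed_point_limit t u -> is_factor u w <-> phi_factor w.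
Proof.
move=> [u_phin phin_cover]; split.
- move=> [i wE]; have [n lt_n] := phin_cover (i + size w).
  exists n; apply/infixP; set k := size w in wE lt_n *.
  exists (take i (phin t n)), (drop k (drop i (phin t n))).
  suff -> : w = take k (drop i (phin t n)) by rewrite !cat_take_drop.
  apply: (@eq_from_nth _ 0) => [|j j_lt].
    by rewrite size_take size_drop; case: ifP => //; lia.
  rewrite [in LHS]wE nth_mkseq // nth_take // nth_drop; apply: u_phin; lia.
- move=> [n /infixP [p [q phinE]]]; exists (size p).
  apply: (@eq_from_nth _ 0); first by rewrite size_mkseq.
  move=> j j_lt; rewrite nth_mkseq // (u_phin n); last first.
    by rewrite phinE !size_cat ltn_add2l ltn_addr.
  by rewrite phinE nth_cat ltnNge leq_addr /= addKn nth_cat j_lt.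
Qed.

Lemma complexity1_le u c :
  is_fixed_point_limit t u -> 0 < size t -> factor_complexity u 1 c -> c <= size t.
Proof.
move=> fixed t_gt0 [s [s_uniq [<- s_factors]]].
have letterE w : w \in s -> w = [:: head 0 w].
  by move=> /s_factors [w1 _]; case: w w1 => [|x []].
rewrite -(size_map (head 0)) -(size_iota 0 (size t)); apply: uniq_leq_size.
  by rewrite map_inj_in_uniq // => w w' /letterE {2}-> /letterE {2}-> ->.
move=> _ /mapP [w w_s ->]; rewrite mem_iota add0n.
have [_ /(is_factor_phi_factor _ fixed) [n]] := (s_factors w).1 w_s.
by rewrite (letterE w w_s) infix1s => /phin_lt_size; apply.
Qed.

End Substitution.

Section FirstDigitAtLeastTwo.
Variable t : seq nat.
Hypothesis t_size : 1 < size t.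
Local Notation t1 := (nth 0 t 0).
Hypothesis t1_ge2 : 2 <= t1.

Lemma phi0E : phi t 0 = [:: 0, 0 & nseq (t1 - 2) 0 ++ [:: 1]].
Proof.
rewrite phi_ltE //; move: t1_ge2; case: (nth 0 t 0) => [|[|k]] //= _.
by rewrite !subSS subn0.
Qed.

Lemma phinS_double n : exists r, phin t n.+1 = phin t n ++ phin t n ++ r.
Proof.
exists (iter n (phiw t) (nseq (t1 - 2) 0 ++ [:: 1])).
have -> : phin t n.+1 = iter n (phiw t) ([:: 0] ++ [:: 0] ++ (nseq (t1 - 2) 0 ++ [:: 1])).
  by rewrite /phin iterSr /phiw /= cats0 phi0E.
by rewrite !iter_phiw_cat.
Qed.

Lemma phinS_prefix n : prefix (nseq t1 0 ++ [:: 1]) (phin t n.+1).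
Proof.
elim: n => [|n IHn]; first by rewrite /phin /= /phiw /= cats0 phi_ltE // prefix_refl.
by have [r ->] := phinS_double n.+1; apply: prefix_catl.
Qed.

Lemma phin_neq0 n : phin t n != [::].
Proof.
case: n => // n; apply: contraTneq (phinS_prefix n) => ->.
by case: (nth 0 t 0).
Qed.

Lemma phi_factor_left w : phi_factor t w -> exists x, phi_factor t (x :: w).
Proof.
move=> [n /infixP [p [q phinE]]]; have [r phinSE] := phinS_double n.
case/lastP E : (phin t n ++ p) => [|s x].
  by move: E (phin_neq0 n); case: (phin t n).
exists x, n.+1; apply/infixP; exists s, (q ++ r).
by rewrite phinSE {2}phinE !catA E cat_rcons -!catA.
Qed.

Lemma pair_phi_factor y : y < size t -> phi_factor t [:: y; 0].
Proof.
elim: y => [_|y IHy y_lt].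
  by exists 1; rewrite /phin /= /phiw /= cats0 phi0E; apply: (prefix_infix [:: 0; 0]).
apply: phi_factor_infix (phi_factor_phiw (IHy (ltnW y_lt))).
rewrite phiw_pair phi_ltE // phi0E -catA; apply: infix_catl.
exact: (prefix_infix [:: y.+1; 0]).
Qed.

Section LastDigitAtLeastTwo.
Hypothesis tm_ge2 : 2 <= last 0 t.
Local Notation w1 := (nseq t1 0 ++ [:: 1]).
Local Notation w2 := (nseq t1.+1 0).

Lemma last_digit_phi_factor : phi_factor t (nseq (last 0 t) 0 ++ w1).
Proof.
have last_lt : (size t).-1 < size t by rewrite prednK // ltnW.
have := phi_factor_phiw (pair_phi_factor last_lt).
by rewrite phiw_pair phi_lastE 1?ltnW // phi_ltE.
Qed.

Lemma w1_left_extension k : k < size t -> phi_factor t (k :: w1).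
Proof.
case: k => [_|k k_lt].
  apply: phi_factor_infix last_digit_phi_factor.
  by rewrite -(subnK (ltnW tm_ge2)) nseqD -catA; apply: infix_catl; apply: infix_refl.
apply: phi_factor_infix (phi_factor_phiw (pair_phi_factor (ltnW k_lt))).
by rewrite phiw_pair !phi_ltE // -catA; apply: infix_catl; apply: infix_refl.
Qed.

Lemma w2_left_extension0 : phi_factor t (0 :: w2).
Proof.
apply: phi_factor_infix last_digit_phi_factor.
rewrite -(subnK tm_ge2) nseqD -catA; apply: infix_catl.
exact: (prefix_infix (0 :: 0 :: nseq t1 0)).
Qed.

Lemma w2_left_extension_neq0 : exists2 x, x != 0 & phi_factor t (x :: w2).
Proof.
have [n w2_n] := phi_factor_infix (infix_cons w2 0) w2_left_extension0.
have [r phinSE] := phinS_double n.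
have /infixP [p [q phinE]] : infix w2 (phin t n.+1).
  by rewrite phinSE; apply: infix_catr.
have [x x_neq0 x_w2] := zero_run_preceded (phinS_prefix n) phinE.
by exists x => //; exists n.+1.
Qed.

Lemma complexity_increment_ge u c c' : is_fixed_point_limit t u ->
  factor_complexity u t1.+1 c -> factor_complexity u t1.+2 c' -> c + size t <= c'.
Proof.
move=> fixed [s [s_uniq [<- s_factors]]] [s' [s'_uniq [<- s'_factors]]].
have factorE w := is_factor_phi_factor w fixed.
have [x x_neq0 x_w2] := w2_left_extension_neq0.
pose E := [seq k :: w1 | k <- iota 0 (size t)] ++ [:: 0 :: w2; x :: w2].
have w1_neq_w2 : w1 != w2.
  by apply/eqP => w12; have := mem_nseq t1.+1 0 1; rewrite -w12 mem_cat inE eqxx orbT.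
have w2_notin y : (y :: w2) \notin [seq k :: w1 | k <- iota 0 (size t)].
  by apply/mapP => [[k _ [_ /esym/eqP w12]]]; apply: (negP w1_neq_w2).
have E_uniq : uniq E.
  rewrite cat_uniq map_inj_uniq ?iota_uniq; last by move=> ? ? [].
  rewrite /= !(negbTE (w2_notin _)) /= inE eqseq_cons eq_sym.
  by rewrite (negbTE x_neq0).
have E_s' : {subset E <= s'}.
  move=> e; rewrite mem_cat => /orP [/mapP [k k_lt ->]|].
    apply/s'_factors; rewrite /= size_cat size_nseq addn1; split => //.
    by apply/factorE/w1_left_extension; rewrite mem_iota in k_lt.
  rewrite !inE => /orP [] /eqP ->; apply/s'_factors; rewrite /= size_nseq; split => //.
    exact/factorE/w2_left_extension0.
  exact/factorE.
have s_ext : {subset s <= map behead s'}.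
  move=> w /s_factors [w_size /factorE w_factor].
  have [y y_w] := phi_factor_left w_factor.
  apply/mapP; exists (y :: w) => //.
  by apply/s'_factors; rewrite /= w_size; split => //; apply/factorE.
have E_B : {subset map behead E <= [:: w1; w2]}.
  move=> w /mapP [e]; rewrite mem_cat => /orP [/mapP [k _ ->] ->|].
    by rewrite inE eqxx.
  by rewrite !inE => /orP [] /eqP -> ->; rewrite eqxx ?orbT.
have := leq_size_image_split s'_uniq E_uniq s_uniq E_s' s_ext E_B.
by rewrite size_cat size_map size_iota /=; lia.
Qed.

End LastDigitAtLeastTwo.
End FirstDigitAtLeastTwo.

Theorem corollary4 (beta : R) (t : seq nat) (u : nat -> nat) :
  Rlt R1 beta ->
  2 <= size t ->
  1 <= nth 0 t 0 ->
  1 <= last 0 t ->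
  finite_dbeta1 beta t ->
  parry_condition t ->
  is_fixed_point_limit t u ->
  affine_complexity u ->
  last 0 t = 1.
Proof.
move=> _ t_size _ tm_ge1 _ parry fixed affine.
apply/eqP; rewrite eqn_leq tm_ge1 andbT leqNgt; apply/negP => tm_ge2.
have t1_ge2 : 2 <= nth 0 t 0 := leq_trans tm_ge2 (parry_last_leq_head t_size parry).
have [c0 [c1 [c [c' [C0 C1 C C' increment]]]]] :=
  affine_complexity_increment (nth 0 t 0).+1 affine.
have := complexity0_gt0 C0.
have := complexity1_le fixed (ltnW t_size) C1.
have := complexity_increment_ge t_size t1_ge2 tm_ge2 fixed C C'.
lia.
Qed.
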